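(* Let $(\mathbb{E}_{s,t}[\cdot])_{0\le s\le t<\infty}$ be an $\mathcal{F}_t$-consistent pricing mechanism (satisfying (A1)–(A4) below). Let $0\le t_0<t_1<\cdots<t_N$ and $K_t=\sum_{i=0}^{N-1}\xi_i1_{[t_i,t_{i+1})}(t)$ with $\xi_i\in L^2(\mathcal{F}_{t_i})$. For $0\le i\le N-1$, $t_i\le s\le t\le t_{i+1}$ and $X\in L^2(\mathcal{F}_t)$, define $\mathbb{E}^i_{s,t}[X;K]:=\mathbb{E}_{s,t}[X+K_t-K_s]$. Then for each $i=0,1,\dots,N-1$, the family $(\mathbb{E}^i_{s,t}[\cdot;K])_{t_i\le s\le t\le t_{i+1}}$ is an $\mathcal{F}_t$-consistent pricing mechanism on $[t_i,t_{i+1}]$.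
   Context: $(\Omega,\mathcal{F},P)$ carries a $d$-dimensional Brownian motion $B$, $\mathcal{F}_t=\sigma\{B_s:s\le t\}$; $L^2(\mathcal{F}_t)$: real square-integrable $\mathcal{F}_t$-measurable random variables. A family of operators $\mathbb{E}_{s,t}:L^2(\mathcal{F}_t)\to L^2(\mathcal{F}_s)$, $T_0\le s\le t\le T_1$, is an $\mathcal{F}_t$-consistent pricing mechanism on $[T_0,T_1]$ if for all $T_0\le s\le t\le T_1$ and $X,X'\in L^2(\mathcal{F}_t)$: (A1) $X\ge X'$ a.s. implies $\mathbb{E}_{s,t}[X]\ge\mathbb{E}_{s,t}[X']$ a.s.; (A2) $\mathbb{E}_{t,t}[X]=X$; (A3) $\mathbb{E}_{r,s}[\mathbb{E}_{s,t}[X]]=\mathbb{E}_{r,t}[X]$ for $T_0\le r\le s$; (A4) $1_A\mathbb{E}_{s,t}[X]=1_A\mathbb{E}_{s,t}[1_AX]$ a.s. for all $A\in\mathcal{F}_s$. *)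

From HB Require Import structures.
From mathcomp Require Import all_boot all_order all_algebra.
From mathcomp Require Import all_classical all_reals all_analysis.
Set Implicit Arguments. Unset Strict Implicit. Unset Printing Implicit Defensive.
Import Order.TTheory GRing.Theory Num.Theory.
Import numFieldNormedType.Exports.
Local Open Scope classical_set_scope.
Local Open Scope ring_scope.

Section Defs.
Context {d : measure_display} {Omega : measurableType d} {R : realType}.

Definition meas_wrt (G : set (set Omega)) (X : Omega -> R) : Prop :=
  forall A : set R, measurable A -> G (X @^-1` A).

Definition L2 (P : probability Omega R) (G : set (set Omega)) (X : Omega -> R)
  : Prop :=
  meas_wrt G X /\ P.-integrable setT (fun w => ((X w) ^+ 2)%:E).

(* d-dimensional standard Brownian motion, given by its coordinates
   B t w i (t >= 0, i : 'I_dim); natural filtration *)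
Definition brownian_filtration (dim : nat) (B : R -> Omega -> 'I_dim -> R)
  (t : R) : set (set Omega) :=
  <<s [set A | exists s, exists i : 'I_dim, exists S : set R,
        [/\ 0 <= s <= t, measurable S & A = (fun w => B s w i) @^-1` S]] >>.

Definition brownian_motion (dim : nat) (P : probability Omega R)
  (B : R -> Omega -> 'I_dim -> R) : Prop :=
  [/\ (forall t i, 0 <= t -> measurable_fun setT (fun w => B t w i)),
      (forall w i, B 0 w i = 0),
      (forall w i, {within [set t | 0 <= t], continuous (fun t => B t w i)}) &
      (* for 0 <= s < t, B_t - B_s is independent of F_s and N(0,(t-s) I_d) *)
      (forall s t, 0 <= s -> s < t ->
         forall A, brownian_filtration B s A ->
         forall S : 'I_dim -> set R, (forall i, measurable (S i)) ->
         P (A `&` \bigcap_(i in [set: 'I_dim])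
               [set w | B t w i - B s w i \in S i]) =
         (P A * \prod_(i < dim) normal_prob 0 (Num.sqrt (t - s)) (S i))%E)].

(* F_t-consistent pricing mechanism on [T0, T1] (T1 may be +oo; when
   T1 = +oo the time range is [T0, +oo)). Operators are total functions on
   random variables; only their behaviour on L^2 is constrained. *)
Definition consistent_pm (P : probability Omega R) (F : R -> set (set Omega))
  (E : R -> R -> (Omega -> R) -> (Omega -> R)) (T0 : R) (T1 : \bar R) : Prop :=
  forall s t, T0 <= s -> s <= t -> (t%:E <= T1)%E ->
  [/\ (forall X, L2 P (F t) X -> L2 P (F s) (E s t X)),
      (forall X X', L2 P (F t) X -> L2 P (F t) X' ->
         {ae P, forall w, X' w <= X w} ->
         {ae P, forall w, E s t X' w <= E s t X w}),
      (forall X, L2 P (F t) X -> {ae P, forall w, E t t X w = X w}),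
      (forall r X, T0 <= r -> r <= s -> L2 P (F t) X ->
         {ae P, forall w, E r s (E s t X) w = E r t X w}) &
      (forall A X, F s A -> L2 P (F t) X ->
         {ae P, forall w, \1_A w * E s t X w
                          = \1_A w * E s t (fun w' => \1_A w' * X w') w})].

Definition step_process (N : nat) (tt : nat -> R) (xi : nat -> Omega -> R)
  (t : R) (w : Omega) : R :=
  \sum_(i < N) xi i w * \1_(`[tt i, tt i.+1[ : set R) t.

Definition E_with_K (E : R -> R -> (Omega -> R) -> (Omega -> R))
  (K : R -> Omega -> R) (s t : R) (X : Omega -> R) : Omega -> R :=
  E s t (fun w => X w + K t w - K s w).

End Defs.

From HB Require Import structures.
From mathcomp Require Import all_boot all_order all_algebra.
From mathcomp Require Import all_classical all_reals all_analysis.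
From mathcomp Require Import lra measurable_realfun.
Set Implicit Arguments. Unset Strict Implicit. Unset Printing Implicit Defensive.
Import Order.TTheory GRing.Theory Num.Theory.
Local Open Scope classical_set_scope.
Local Open Scope ring_scope.

(* Shifting the argument of E_{s,t} by the increment K_t - K_s preserves
   monotonicity, normalisation and locality, and still maps L^2(F_t) to
   L^2(F_s) because K is adapted.  For the tower property the increments over
   [r, s] and [s, t] add up to the one over [r, t] as soon as K_s = K_r; the
   step process is constant on [t_i, t_{i+1}), so this holds unless
   s = t_{i+1}, and then t = s and E_{s,s} is the identity almost surely. *)

Section L2_generated.
Context {d : measure_display} {Omega : measurableType d} {R : realType}.
Variables (P : probability Omega R) (C : set (set Omega)).
Hypothesis C_measurable : C `<=` measurable.

Lemma meas_wrt_gsigmaE (X : Omega -> R) :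
  meas_wrt <<s C >> X <-> measurable_fun setT (X : g_sigma_algebraType C -> R).
Proof.
split=> [mX _ A mA|mX A mA]; first by rewrite setTI; exact: mX.
by have := mX measurableT A mA; rewrite setTI.
Qed.

Lemma L2_sqr_dominated (X Y Z : Omega -> R) :
  L2 P <<s C >> X -> L2 P <<s C >> Y -> meas_wrt <<s C >> Z ->
  (forall w, Z w ^+ 2 <= 2 * (X w ^+ 2 + Y w ^+ 2)) ->
  L2 P <<s C >> Z.
Proof.
move=> [_ iX] [_ iY] mZ Z_le; split => //.
have mZ' : measurable_fun setT Z.
  move=> _ A mA; rewrite setTI.
  apply: (smallest_sub (@sigma_algebra_measurable _ Omega) C_measurable).
  exact: mZ.
have iXY := integrableZl measurableT 2 (integrableD measurableT iX iY).
apply: (le_integrable measurableT _ _ iXY).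
  by apply/measurable_EFinP; exact: measurable_funX.
move=> w _; rewrite -EFinD -EFinM !abse_EFin lee_fin !ger0_norm ?sqr_ge0 //.
by rewrite mulr_ge0 // addr_ge0 ?sqr_ge0.
Qed.

Lemma L2_cst0 : L2 P <<s C >> (fun _ => 0).
Proof.
split; last by rewrite expr0n; exact: integrable0.
by apply/meas_wrt_gsigmaE; exact: measurable_cst.
Qed.

Lemma L2D (X Y : Omega -> R) :
  L2 P <<s C >> X -> L2 P <<s C >> Y -> L2 P <<s C >> (fun w => X w + Y w).
Proof.
move=> LX LY; apply: (L2_sqr_dominated LX LY).
- apply/meas_wrt_gsigmaE; apply: measurable_funD; apply/meas_wrt_gsigmaE.
  + by case: LX.
  + by case: LY.
- by move=> w; have := sqr_ge0 (X w - Y w); rewrite !expr2; nra.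
Qed.

Lemma L2B (X Y : Omega -> R) :
  L2 P <<s C >> X -> L2 P <<s C >> Y -> L2 P <<s C >> (fun w => X w - Y w).
Proof.
move=> LX LY; apply: (L2_sqr_dominated LX LY).
- apply/meas_wrt_gsigmaE; apply: measurable_funB; apply/meas_wrt_gsigmaE.
  + by case: LX.
  + by case: LY.
- by move=> w; have := sqr_ge0 (X w + Y w); rewrite !expr2; nra.
Qed.

Lemma L2_indicM (A : set Omega) (X : Omega -> R) :
  <<s C >> A -> L2 P <<s C >> X -> L2 P <<s C >> (fun w => \1_A w * X w).
Proof.
move=> mA LX; apply: (L2_sqr_dominated LX L2_cst0).
- apply/meas_wrt_gsigmaE; apply: measurable_funM.
  + exact: (@measurable_indic _ (g_sigma_algebraType C)).
  + by apply/meas_wrt_gsigmaE; case: LX.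
- by move=> w; rewrite indicE; case: (w \in A); rewrite /= !expr2; nra.
Qed.

End L2_generated.

Lemma L2_subset (d : measure_display) (Omega : measurableType d) (R : realType)
    (P : probability Omega R) (G G' : set (set Omega)) (X : Omega -> R) :
  G `<=` G' -> L2 P G X -> L2 P G' X.
Proof. by move=> GG' [mX iX]; split=> // A mA; exact/GG'/mX. Qed.

Lemma monotone_ae_eq (d : measure_display) (Omega : measurableType d)
    (R : realType) (P : probability Omega R) (G : set (set Omega))
    (f : (Omega -> R) -> Omega -> R) (X Y : Omega -> R) :
  (forall X X', L2 P G X -> L2 P G X' -> {ae P, forall w, X' w <= X w} ->
     {ae P, forall w, f X' w <= f X w}) ->
  L2 P G X -> L2 P G Y -> {ae P, forall w, X w = Y w} ->
  {ae P, forall w, f X w = f Y w}.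
Proof.
move=> f_mono LX LY XY.
have fYX : {ae P, forall w, f Y w <= f X w}.
  by apply: f_mono => //; apply: filterS XY => w ->.
have fXY : {ae P, forall w, f X w <= f Y w}.
  by apply: f_mono => //; apply: filterS XY => w ->.
by apply: filterS2 fYX fXY => w fYXw fXYw; apply/le_anti; rewrite fYXw fXYw.
Qed.

Lemma consistent_pm_sub (d : measure_display) (Omega : measurableType d)
    (R : realType) (P : probability Omega R) (F : R -> set (set Omega))
    (E : R -> R -> (Omega -> R) -> Omega -> R) (T0 T0' : R) (T1 T1' : \bar R) :
  T0 <= T0' -> (T1' <= T1)%E ->
  consistent_pm P F E T0 T1 -> consistent_pm P F E T0' T1'.
Proof.
move=> T0T0' T1'T1 HE s t T0's st tT1'.
have [LE A1 A2 A3 A4] := HE s t (le_trans T0T0' T0's) st (le_trans tT1' T1'T1).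
split=> // r X T0'r; exact/A3/(le_trans T0T0' T0'r).
Qed.

Section shifted_pricing_mechanism.
Context {d : measure_display} {Omega : measurableType d} {R : realType}.
Variables (P : probability Omega R) (C : R -> set (set Omega)).
Let F t := <<s C t >>.
Hypothesis C_measurable : forall t, C t `<=` measurable.
Hypothesis F_mono : forall s t, s <= t -> F s `<=` F t.
Variables (E : R -> R -> (Omega -> R) -> Omega -> R) (T0 T1 : R).
Hypothesis E_consistent : consistent_pm P F E T0 T1%:E.
Variable K : R -> Omega -> R.
Hypothesis K_adapted : forall u, T0 <= u -> u <= T1 -> L2 P (F u) (K u).
Hypothesis K_const : forall u v, T0 <= u -> u <= v -> v < T1 -> K u = K v.

Let fun_addrK (f g : Omega -> R) : (fun w => f w + g w - g w) = f.
Proof. by apply/funext => w; rewrite addrK. Qed.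

Let L2_shift s t X : T0 <= s -> s <= t -> t <= T1 -> L2 P (F t) X ->
  L2 P (F t) (fun w => X w + K t w - K s w).
Proof.
move=> T0s st tT1 LX; have T0t := le_trans T0s st.
apply: L2B => //; first by apply: L2D => //; exact: K_adapted.
exact: L2_subset (F_mono st) (K_adapted T0s (le_trans st tT1)).
Qed.

Let E_with_K_tower r s t X : T0 <= r -> r <= s -> s <= t -> t <= T1 ->
  L2 P (F t) X ->
  {ae P, forall w, E_with_K E K r s (E_with_K E K s t X) w =
                   E_with_K E K r t X w}.
Proof.
move=> T0r rs st tT1 LX; rewrite /E_with_K.
have T0s := le_trans T0r rs; have sT1 := le_trans st tT1.
have [LEst _ _ A3 _] := E_consistent T0s st (tT1 : (t%:E <= T1%:E)%E).
have [_ A1rs _ _ _] := E_consistent T0r rs (sT1 : (s%:E <= T1%:E)%E).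
have [sT1'|T1s] := ltP s T1.
  rewrite -(K_const T0r rs sT1') fun_addrK.
  by apply: A3 => //; exact: L2_shift (le_trans rs st) tT1 LX.
have ts : t = s by apply/le_anti; rewrite st (le_trans tT1 T1s).
subst t; rewrite fun_addrK.
have [_ _ A2 _ _] := E_consistent T0s (lexx s) (sT1 : (s%:E <= T1%:E)%E).
apply: (monotone_ae_eq A1rs); [exact/L2_shift/LEst | exact: L2_shift |].
by apply: filterS (A2 _ LX) => w ->.
Qed.

Lemma consistent_pm_E_with_K : consistent_pm P F (E_with_K E K) T0 T1%:E.
Proof.
move=> s t T0s st tT1; have tT1' : t <= T1 by rewrite -lee_fin.
have [LE A1 A2 A3 A4] := E_consistent T0s st tT1; split.
- by move=> X LX; apply/LE/L2_shift.
- move=> X X' LX LX' X'X; apply: A1; try exact: L2_shift.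
  by apply: filterS X'X => w; lra.
- move=> X LX; rewrite /E_with_K fun_addrK.
  have [_ _ A2t _ _] := E_consistent (le_trans T0s st) (lexx t) tT1.
  exact: A2t.
- by move=> r X T0r rs LX; exact: E_with_K_tower.
- move=> A X FsA LX; rewrite /E_with_K.
  have FtA : F t A := F_mono st FsA.
  have LAX : L2 P (F t) (fun w => \1_A w * X w) by exact: L2_indicM.
  apply: filterS2 (A4 A _ FsA (L2_shift T0s st tT1' LX))
                  (A4 A _ FsA (L2_shift T0s st tT1' LAX)) => w -> ->.
  congr (_ * E s t _ w); apply/funext => w'.
  by rewrite indicE; case: (w' \in A); rewrite /= ?mul1r ?mul0r.
Qed.

End shifted_pricing_mechanism.

Lemma indic_itv_co (R : realType) (a b t : R) :
  \1_(`[a, b[ : set R) t = if (a <= t) && (t < b) then 1 else 0 :> R.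
Proof.
rewrite indicE; case: ifP => h; first by rewrite mem_set //= in_itv /= h.
by rewrite memNset //= in_itv /= h.
Qed.

Section step_process.
Context {d : measure_display} {Omega : measurableType d} {R : realType}.
Variables (N : nat) (tt : nat -> R) (xi : nat -> Omega -> R).
Hypothesis tt_lt : forall i, (i < N)%N -> tt i < tt i.+1.

Lemma le_times m n : (m <= n <= N)%N -> tt m <= tt n.
Proof.
move=> /andP[mn nN].
have := @Order.NatMonotonyTheory.nondecn_inP _ _ [pred k | (k <= N)%N] tt.
apply => //=.
- by move=> i j _ jN k /andP[_ kj]; rewrite inE (leq_trans (ltnW kj)).
- by move=> k _ k1N; apply/ltW/tt_lt.
- by rewrite inE (leq_trans mn).
Qed.

Lemma step_process_itv j t : (j < N)%N -> tt j <= t < tt j.+1 ->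
  step_process N tt xi t = xi j.
Proof.
move=> jN /andP[jt tj]; apply/funext => w; rewrite /step_process.
rewrite (bigD1 (Ordinal jN)) //= big1 => [|k kj].
  by rewrite indic_itv_co jt tj mulr1 addr0.
rewrite indic_itv_co; case: ifP => [/andP[kt tk]|_]; last by rewrite mulr0.
have {}kj : val k != j by apply: contra kj => /eqP kj; apply/eqP/val_inj.
case: ltngtP kj => // [kj|jk] _.
- by have := @le_times k.+1 j; rewrite kj ltnW //; lra.
- by have := @le_times j.+1 k; rewrite jk ltnW //; lra.
Qed.

Lemma step_process_ge t : tt N <= t -> step_process N tt xi t = fun=> 0.
Proof.
move=> Nt; apply/funext => w; rewrite /step_process big1 // => k _.
rewrite indic_itv_co; case: ifP => [/andP[_ tk]|_]; last by rewrite mulr0.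
by have := @le_times k.+1 N; rewrite ltn_ord leqnn; lra.
Qed.

Variables (P : probability Omega R) (C : R -> set (set Omega)).
Let F t := <<s C t >>.
Hypothesis F_mono : forall s t, s <= t -> F s `<=` F t.
Hypothesis xi_adapted : forall i, (i < N)%N -> L2 P (F (tt i)) (xi i).

Lemma step_process_adapted i u : (i < N)%N -> tt i <= u <= tt i.+1 ->
  L2 P (F u) (step_process N tt xi u).
Proof.
move=> iN /andP[iu ui]; have [ui'|ui'] := ltP u (tt i.+1).
  rewrite (step_process_itv iN); last by rewrite iu.
  exact: L2_subset (F_mono iu) (xi_adapted iN).
have -> : u = tt i.+1 by apply/le_anti; rewrite ui ui'.
have [i1N|Ni1] := ltnP i.+1 N.
  by rewrite (step_process_itv i1N) ?lexx ?tt_lt //; exact: xi_adapted.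
by rewrite step_process_ge ?le_times ?Ni1 //; exact: L2_cst0.
Qed.

Lemma step_process_const i u v : (i < N)%N -> tt i <= u -> u <= v ->
  v < tt i.+1 -> step_process N tt xi u = step_process N tt xi v.
Proof.
move=> iN iu uv vi.
by rewrite !(step_process_itv iN) // ?(le_lt_trans uv vi) ?(le_trans iu uv) ?iu.
Qed.

End step_process.

Lemma brownian_filtration_mono (d : measure_display) (Omega : measurableType d)
    (R : realType) (dim : nat) (B : R -> Omega -> 'I_dim -> R) (s t : R) :
  s <= t -> brownian_filtration B s `<=` brownian_filtration B t.
Proof.
move=> st; apply: sub_sigma_algebra2 => A [u [i [S [/andP[u0 us] mS ->]]]].
by exists u, i, S; rewrite u0 (le_trans us st).
Qed.

Lemma brownian_generators_measurable (d : measure_display)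
    (Omega : measurableType d) (R : realType) (P : probability Omega R)
    (dim : nat) (B : R -> Omega -> 'I_dim -> R) (t : R) :
  brownian_motion P B ->
  [set A | exists s, exists i : 'I_dim, exists S : set R,
     [/\ 0 <= s <= t, measurable S & A = (fun w => B s w i) @^-1` S]]
  `<=` measurable.
Proof.
case=> mB _ _ _ A [u [i [S [/andP[u0 _] mS ->]]]].
by have := mB u i u0 measurableT S mS; rewrite setTI.
Qed.

Theorem lemma6p1 (d : measure_display) (Omega : measurableType d)
  (R : realType) (P : probability Omega R) (dim : nat)
  (B : R -> Omega -> 'I_dim -> R)
  (E : R -> R -> (Omega -> R) -> (Omega -> R))
  (N : nat) (tt : nat -> R) (xi : nat -> Omega -> R) :
  (0 < dim)%N ->
  brownian_motion P B ->
  consistent_pm P (brownian_filtration B) E 0 +oo%E ->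
  0 <= tt 0%N ->
  (forall i, (i < N)%N -> tt i < tt i.+1) ->
  (forall i, (i < N)%N -> L2 P (brownian_filtration B (tt i)) (xi i)) ->
  forall i, (i < N)%N ->
    consistent_pm P (brownian_filtration B)
      (E_with_K E (step_process N tt xi)) (tt i) (tt i.+1)%:E.
Proof.
move=> _ BM HE tt0 tt_lt xi_adapted i iN.
have F_mono := @brownian_filtration_mono _ Omega R dim B.
have tti0 : 0 <= tt i := le_trans tt0 (le_times tt_lt (m := 0) (ltnW iN)).
apply: consistent_pm_E_with_K.
- by move=> t; exact: brownian_generators_measurable BM.
- exact: F_mono.
- exact: consistent_pm_sub tti0 (leey _) HE.
- move=> u iu ui.
  have := step_process_adapted tt_lt F_mono xi_adapted iN (u := u).
  by apply; rewrite iu ui.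
- by move=> u v; exact: (step_process_const xi tt_lt iN).
Qed.
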